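(* Assume the Lipschitz gradient assumption, $r_1>L_x$, and $r_2>(\frac{L_y}{r_1-L_x}+2)L_y$. Then for all $x,x'\in\mathcal X$, $y,y'\in\mathcal Y$, $z,z'\in\mathbb R^n$, $v,v'\in\mathbb R^d$: (i) $\|x(y',z,v)-x(y,z,v)\|\le\sigma_1\|y'-y\|$; (ii) $\|x(y,z',v)-x(y,z,v)\|\le\sigma_2\|z-z'\|$; (iii) $\|x(z',v)-x(z,v)\|\le\sigma_2\|z-z'\|$; (iv) $\|y(z,v)-y(z',v)\|\le\sigma_3\|z-z'\|$; (v) $\|y(x,z,v)-y(x',z,v)\|\le\sigma_4\|x-x'\|$; (vi) $\|y(x,z,v)-y(x,z,v')\|\le\sigma_5\|v-v'\|$; (vii) $\|y(z,v)-y(z,v')\|\le\sigma_5\|v-v'\|$, where $\sigma_1=\frac{L_y+r_1-L_x}{r_1-L_x}$, $\sigma_2=\frac{r_1}{r_1-L_x}$, $\sigma_3=\frac{r_1\sigma_1}{r_2-L_y}+\frac{\sigma_2}{\sigma_1}$, $\sigma_4=\frac{L_x+r_2-L_y}{r_2-L_y}$, $\sigma_5=\frac{r_2}{r_2-L_y}$.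
   Context: Let $\mathcal X\subset\mathbb R^n$, $\mathcal Y\subset\mathbb R^d$ be nonempty convex compact sets and $f:\mathbb R^n\times\mathbb R^d\to\mathbb R$ continuously differentiable. Lipschitz gradient assumption: there are $L_x,L_y>0$ such that for all $x,x'\in\mathcal X$, $y,y'\in\mathcal Y$, $\|\nabla_x f(x,y)-\nabla_x f(x',y')\|\le L_x(\|x-x'\|+\|y-y'\|)$ and $\|\nabla_y f(x,y)-\nabla_y f(x',y')\|\le L_y(\|x-x'\|+\|y-y'\|)$. $F(x,y,z,v)=f(x,y)+\frac{r_1}{2}\|x-z\|^2-\frac{r_2}{2}\|y-v\|^2$. For $z\in\mathbb R^n$, $v\in\mathbb R^d$: $d(y,z,v)=\min_{x\in\mathcal X}F(x,y,z,v)$ with unique minimizer $x(y,z,v)$; $h(x,z,v)=\max_{y\in\mathcal Y}F(x,y,z,v)$ with unique maximizer $y(x,z,v)$; $x(z,v)=\arg\min_{x\in\mathcal X}h(x,z,v)$; $y(z,v)=\arg\max_{y\in\mathcal Y}d(y,z,v)$. *)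

From HB Require Import structures.
From mathcomp Require Import all_boot all_order all_algebra.
From mathcomp Require Import all_classical all_reals all_analysis.
Set Implicit Arguments. Unset Strict Implicit. Unset Printing Implicit Defensive.
Import Order.TTheory GRing.Theory Num.Theory.
Import numFieldNormedType.Exports.
Local Open Scope classical_set_scope.
Local Open Scope ring_scope.

Definition edot (R : realType) (n : nat) (u v : 'rV[R]_n) : R :=
  \sum_(i < n) u ord0 i * v ord0 i.
Definition enorm (R : realType) (n : nat) (u : 'rV[R]_n) : R :=
  Num.sqrt (edot u u).

Definition gradx (R : realType) (n d : nat)
    (f : 'rV[R]_n * 'rV[R]_d -> R) (p : 'rV[R]_n * 'rV[R]_d) : 'rV[R]_n :=
  \row_(i < n) ('d f p (delta_mx ord0 i, 0)).
Definition grady (R : realType) (n d : nat)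
    (f : 'rV[R]_n * 'rV[R]_d -> R) (p : 'rV[R]_n * 'rV[R]_d) : 'rV[R]_d :=
  \row_(j < d) ('d f p (0, delta_mx ord0 j)).

Definition C1 (R : realType) (n d : nat) (f : 'rV[R]_n * 'rV[R]_d -> R) :=
  (forall p, differentiable f p) /\
  continuous (gradx f) /\ continuous (grady f).

Definition lipschitz_grad (R : realType) (n d : nat)
    (X : set 'rV[R]_n) (Y : set 'rV[R]_d) (f : 'rV[R]_n * 'rV[R]_d -> R)
    (Lx Ly : R) :=
  0 < Lx /\ 0 < Ly /\
  forall x x' y y', X x -> X x' -> Y y -> Y y' ->
    enorm (gradx f (x, y) - gradx f (x', y')) <= Lx * (enorm (x - x') + enorm (y - y')) /\
    enorm (grady f (x, y) - grady f (x', y')) <= Ly * (enorm (x - x') + enorm (y - y')).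

Definition Fobj (R : realType) (n d : nat) (f : 'rV[R]_n * 'rV[R]_d -> R)
    (r1 r2 : R) (x : 'rV[R]_n) (y : 'rV[R]_d) (z : 'rV[R]_n) (v : 'rV[R]_d) : R :=
  f (x, y) + r1 / 2 * enorm (x - z) ^+ 2 - r2 / 2 * enorm (y - v) ^+ 2.

Definition dfun (R : realType) (n d : nat) (X : set 'rV[R]_n)
    (f : 'rV[R]_n * 'rV[R]_d -> R) (r1 r2 : R) y z v : R :=
  inf [set Fobj f r1 r2 x y z v | x in X].
Definition hfun (R : realType) (n d : nat) (Y : set 'rV[R]_d)
    (f : 'rV[R]_n * 'rV[R]_d -> R) (r1 r2 : R) x z v : R :=
  sup [set Fobj f r1 r2 x y z v | y in Y].

Definition is_argmin (T : Type) (R : realType) (A : set T) (g : T -> R) (a : T) :=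
  A a /\ forall b, A b -> g a <= g b.
Definition is_argmax (T : Type) (R : realType) (A : set T) (g : T -> R) (a : T) :=
  A a /\ forall b, A b -> g b <= g a.

From HB Require Import structures.
From mathcomp Require Import all_boot all_order all_algebra.
From mathcomp Require Import all_classical all_reals all_analysis.
From mathcomp Require Import ring lra.
Import Order.TTheory GRing.Theory Num.Theory.
Import numFieldNormedType.Exports.
Local Open Scope classical_set_scope.
Local Open Scope ring_scope.
Set Implicit Arguments. Unset Strict Implicit. Unset Printing Implicit Defensive.

(* Put mu1 = r1 - Lx and mu2 = r2 - Ly.  A gradient that is L-Lipschitz along
   segments makes a function L-weakly convex, so F(., y, z, v) is
   mu1-strongly convex on X and -F(x, ., z, v) is mu2-strongly convex on Y;
   the same holds for h(., z, v) and -d(., z, v), which are pointwise maxima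
   of such functions.  All seven estimates then follow from one stability
   principle: if a1 minimizes G1 and a2 minimizes G2 over a convex set, both
   mu-strongly convex, then  mu |a2 - a1|^2 <= (G1 - G2)(a2) - (G1 - G2)(a1).
   In (i) and (v) the right-hand side is a mixed second difference of f,
   bounded by the gradient Lipschitz constants; in (ii), (iii), (vi), (vii)
   it is a difference of quadratic penalties; in (iv) it is bounded through
   (i) and (ii), and a quadratic inequality produces sigma3. *)

Section Euclidean.
Variables (R : realType) (m : nat).
Implicit Types (u w p a b z : 'rV[R]_m) (k t : R).

Lemma edot_ge0 u : 0 <= edot u u.
Proof. by apply: sumr_ge0 => i _; rewrite -expr2 sqr_ge0. Qed.

Lemma enorm_ge0 u : 0 <= enorm u.
Proof. exact: sqrtr_ge0. Qed.

Lemma enorm_sq u : enorm u ^+ 2 = edot u u.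
Proof. by rewrite /enorm sqr_sqrtr // edot_ge0. Qed.

Lemma edotC u w : edot u w = edot w u.
Proof. by apply: eq_bigr => i _; rewrite mulrC. Qed.

Lemma edotZl k u w : edot (k *: u) w = k * edot u w.
Proof. by rewrite /edot mulr_sumr; apply: eq_bigr => i _; rewrite !mxE mulrA. Qed.

Lemma edotZr k u w : edot w (k *: u) = k * edot w u.
Proof. by rewrite edotC edotZl edotC. Qed.

Lemma edotBl u w p : edot (u - w) p = edot u p - edot w p.
Proof. by rewrite /edot -sumrB; apply: eq_bigr => i _; rewrite !mxE mulrBl. Qed.

Lemma edotBr u w p : edot p (u - w) = edot p u - edot p w.
Proof. by rewrite edotC edotBl !(edotC p). Qed.

Lemma edotNl u w : edot (- u) w = - edot u w.
Proof. by rewrite -scaleN1r edotZl mulN1r. Qed.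

(* If <w, w> = 0 then w = 0, so every inner product with w vanishes. *)
Lemma edot_norm0 u w : edot w w = 0 -> edot u w = 0.
Proof.
move=> /eqP; rewrite psumr_eq0 => [/allP w0|i _]; last by rewrite -expr2 sqr_ge0.
rewrite /edot big1 // => i _.
have /= := w0 i (mem_index_enum _).
by rewrite mulf_eq0 orbb => /eqP ->; rewrite mulr0.
Qed.

(* Cauchy-Schwarz, from the nonnegativity of |<w,w> u - <u,w> w|^2. *)
Lemma edot_CS u w : edot u w <= enorm u * enorm w.
Proof.
set A := edot u u; set B := edot w w; set C := edot u w.
have [B0|Bn0] := eqVneq B 0.
  by rewrite /C edot_norm0 // mulr_ge0 ?enorm_ge0.
have B_gt0 : 0 < B by rewrite lt_def Bn0 edot_ge0.
have key : 0 <= B * (A * B - C ^+ 2).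
  have := edot_ge0 (B *: u - C *: w).
  rewrite !(edotBl, edotBr, edotZl, edotZr) -/A -/B -/C (edotC w u) -/C.
  by congr (0 <= _); ring.
have CAB : C ^+ 2 <= A * B by rewrite -subr_ge0 -(pmulr_rge0 _ B_gt0).
rewrite /enorm -sqrtrM ?edot_ge0 // (le_trans (ler_norm C)) //.
by rewrite -sqrtr_sqr ler_sqrt // mulr_ge0 ?edot_ge0.
Qed.

Lemma enormZ k u : enorm (k *: u) = `|k| * enorm u.
Proof.
by rewrite /enorm edotZl edotZr mulrA -expr2 sqrtrM ?sqr_ge0 // sqrtr_sqr.
Qed.

Lemma enormN u : enorm (- u) = enorm u.
Proof. by rewrite -scaleN1r enormZ normrN normr1 mul1r. Qed.

Lemma enormB u w : enorm (u - w) = enorm (w - u).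
Proof. by rewrite -opprB enormN. Qed.

Lemma enorm0 : enorm (0 : 'rV[R]_m) = 0.
Proof. by rewrite -(scale0r 0) enormZ normr0 mul0r. Qed.

Lemma edot_segment a b z t :
  edot (a + t *: (b - a) - z) (a + t *: (b - a) - z) =
  (1 - t) * edot (a - z) (a - z) + t * edot (b - z) (b - z)
  - t * (1 - t) * edot (b - a) (b - a).
Proof.
rewrite /edot !mulr_sumr -big_split /= -sumrB; apply: eq_bigr => i _.
by rewrite !mxE; ring.
Qed.

Lemma sqdist_shift a1 a2 z z' :
  (edot (a2 - z) (a2 - z) - edot (a2 - z') (a2 - z')) -
  (edot (a1 - z) (a1 - z) - edot (a1 - z') (a1 - z')) =
  2 * edot (a2 - a1) (z' - z).
Proof.
rewrite /edot !mulr_sumr -!sumrB; apply: eq_bigr => i _.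
by rewrite !mxE; ring.
Qed.

Lemma segment_mem (S : set 'rV[R]_m) a b t :
  convex_set (S : set (convex_lmodType 'rV[R]_m)) -> S a -> S b ->
  0 <= t -> t <= 1 -> S (a + t *: (b - a)).
Proof.
move=> cS Sa Sb t0 t1.
have := cS b a (Itv01 t0 t1) (mem_set Sb) (mem_set Sa); rewrite inE /=.
suff -> : a + t *: (b - a) =
          conv (Itv01 t0 t1) (b : convex_lmodType _) (a : convex_lmodType _) by [].
by rewrite /conv /=; apply/rowP => i; rewrite !mxE /unstable.onem; ring.
Qed.

Lemma segment_diff a u (s t : R) : (a + s *: u) - (a + t *: u) = (s - t) *: u.
Proof. by apply/rowP => i; rewrite !mxE; ring. Qed.

End Euclidean.

Section RealCalculus.
Variable R : realType.

Lemma line_derive (V : normedModType R) (g : V -> R) (p w : V) (t : R) :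
  differentiable g (p + t *: w) ->
  is_derive t 1 (fun s => g (p + s *: w)) ('d g (p + t *: w) w).
Proof.
move=> dg.
pose l := fun s : R => p + s *: w.
have dl : is_diff t l (fun h => 0 + h *: w).
  exact: is_diffD (is_diff_cst _ _) (is_diff_scalel _ _).
have dgl : differentiable (g \o l) t.
  by apply: differentiable_comp => //; exact: ex_diff.
split; first exact: diff_derivable.
rewrite deriveE // diff_comp ?(ex_diff dl) //.
by rewrite (@diff_val _ _ _ _ _ _ _ dl) /= add0r scale1r.
Qed.

Lemma derive_continuous_within (k dk : R -> R) (a b : R) :
  (forall s : R, is_derive s (1 : R) k (dk s)) -> {within `[a, b], continuous k}.
Proof.
move=> dk_k; apply: continuous_subspaceT => x.
by apply: differentiable_continuous; apply/derivable1_diffP; case: (dk_k x).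
Qed.

Lemma mvt_unit_bound (k dk : R -> R) (K : R) :
  (forall s : R, is_derive s (1 : R) k (dk s)) ->
  (forall s, 0 <= s -> s <= 1 -> dk s <= K) -> k 1 - k 0 <= K.
Proof.
move=> dk_k dkK.
have [c c01 ->] := @MVT_segment R k dk 0 1 ler01 (fun x _ => dk_k x)
                     (derive_continuous_within (a := 0) (b := 1) dk_k).
by rewrite subr0 mulr1; apply: dkK; rewrite (itvP c01).
Qed.

(* If the derivative decreases at rate at most 2c on [0, 1], then k is
   c-semiconvex there: k + c s^2 is convex (two mean value theorems). *)
Lemma semiconvex_of_derivative (k dk : R -> R) (c : R) :
  (forall s : R, is_derive s (1 : R) k (dk s)) ->
  (forall s t, 0 <= s -> s <= t -> t <= 1 -> dk s - dk t <= 2 * c * (t - s)) ->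
  forall t, 0 <= t -> t <= 1 -> k t <= (1 - t) * k 0 + t * k 1 + c * t * (1 - t).
Proof.
move=> dk_k dk_mono t t0 t1.
have [->|tn0] := eqVneq t 0; first by lra.
have [->|tn1] := eqVneq t 1; first by lra.
have t_gt0 : 0 < t by rewrite lt_def tn0 t0.
have t_lt1 : t < 1 by rewrite lt_def eq_sym tn1 t1.
pose q s := k s + c * (s * s).
pose dq s := dk s + c * (s * 1 + s * 1).
have dq_q (s : R) : is_derive s (1 : R) q (dq s).
  exact: is_deriveD (dk_k s) (is_deriveZ c (is_deriveM _ _)).
have [c1 c1i E1] := @MVT R q dq 0 t t_gt0 (fun x _ => dq_q x)
                       (derive_continuous_within (a := 0) (b := t) dq_q).
have [c2 c2i E2] := @MVT R q dq t 1 t_lt1 (fun x _ => dq_q x)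
                       (derive_continuous_within (a := t) (b := 1) dq_q).
have c10 : 0 <= c1 by rewrite (itvP c1i).
have c1t : c1 <= t by rewrite (itvP c1i).
have c2t : t <= c2 by rewrite (itvP c2i).
have c21 : c2 <= 1 by rewrite (itvP c2i).
have dq_mono : dq c1 <= dq c2.
  by have := dk_mono c1 c2 c10 (le_trans c1t c2t) c21; rewrite /dq; lra.
have : t * (1 - t) * dq c1 <= t * (1 - t) * dq c2.
  by rewrite ler_wpM2l // mulr_ge0 // subr_ge0.
by move: E1 E2; rewrite /q; nra.
Qed.

End RealCalculus.

Section LineGradient.
Variables (R : realType) (m : nat).
Implicit Types (g : 'rV[R]_m -> R) (G : 'rV[R]_m -> 'rV[R]_m) (S : set 'rV[R]_m).

Definition line_gradient g G := forall p w (s : R),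
  is_derive s 1 (fun t => g (p + t *: w)) (edot (G (p + s *: w)) w).

Definition lipschitz_in S G (L : R) :=
  forall a b, S a -> S b -> enorm (G a - G b) <= L * enorm (a - b).

Lemma line_gradientN g G :
  line_gradient g G -> line_gradient (fun a => - g a) (fun a => - G a).
Proof. by move=> dg p w s; rewrite edotNl; exact: is_deriveN. Qed.

Lemma line_gradientB g1 g2 G1 G2 : line_gradient g1 G1 -> line_gradient g2 G2 ->
  line_gradient (fun a => g1 a - g2 a) (fun a => G1 a - G2 a).
Proof. by move=> dg1 dg2 p w s; rewrite edotBl; exact: is_deriveB. Qed.

Lemma lipschitz_inN S G L : lipschitz_in S G L -> lipschitz_in S (fun a => - G a) L.
Proof. by move=> HG a b Sa Sb; rewrite -opprD enormN; exact: HG. Qed.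

Variable S : set 'rV[R]_m.
Hypothesis cS : convex_set (S : set (convex_lmodType 'rV[R]_m)).

Lemma lipschitz_gradient_semiconvex g G L a b t :
  line_gradient g G -> lipschitz_in S G L -> S a -> S b -> 0 <= t -> t <= 1 ->
  g (a + t *: (b - a)) <=
  (1 - t) * g a + t * g b + L / 2 * edot (b - a) (b - a) * t * (1 - t).
Proof.
move=> dg HG Sa Sb t0 t1.
have := semiconvex_of_derivative (c := L / 2 * edot (b - a) (b - a))
          (dg a (b - a)) _ t0 t1.
rewrite scale0r addr0 scale1r [a + (b - a)]addrC subrK; apply.
move=> s u s0 su u1; rewrite -edotBl.
have Ss : S (a + s *: (b - a)) by apply: segment_mem => //; exact: le_trans u1.
have Su : S (a + u *: (b - a)) by apply: segment_mem => //; exact: le_trans su.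
apply: (le_trans (edot_CS _ _)).
apply: (le_trans (ler_wpM2r (enorm_ge0 _) (HG _ _ Ss Su))).
rewrite segment_diff enormZ ler0_norm ?subr_le0 // -enorm_sq.
by rewrite le_eqVlt; apply/orP; left; apply/eqP; field.
Qed.

Lemma bounded_gradient_increment g G K a b :
  line_gradient g G -> (forall w, S w -> enorm (G w) <= K) -> S a -> S b ->
  g b - g a <= K * enorm (b - a).
Proof.
move=> dg GK Sa Sb.
have := mvt_unit_bound (K := K * enorm (b - a)) (dg a (b - a)).
rewrite scale0r addr0 scale1r [a + (b - a)]addrC subrK; apply.
move=> s s0 s1; apply: (le_trans (edot_CS _ _)).
by apply: ler_wpM2r; [exact: enorm_ge0 | apply: GK; exact: segment_mem].
Qed.

End LineGradient.

Section PartialGradients.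
Variables (R : realType) (n d : nat) (f : 'rV[R]_n * 'rV[R]_d -> R).

Lemma diff_gradx q (wx : 'rV[R]_n) : 'd f q (wx, 0) = edot (gradx f q) wx.
Proof.
have -> : (wx, 0 : 'rV[R]_d) = \sum_(i < n) wx 0 i *: (delta_mx 0 i, 0 : 'rV[R]_d).
  rewrite {1}(row_sum_delta wx); elim/big_rec2: _ => [//|i a b _ <-].
  by apply: injective_projections => /=; rewrite ?scaler0 ?addr0.
rewrite linear_sum /edot; apply: eq_bigr => i _.
by rewrite linearZ /= !mxE mulrC.
Qed.

Lemma diff_grady q (wy : 'rV[R]_d) : 'd f q (0, wy) = edot (grady f q) wy.
Proof.
have -> : (0 : 'rV[R]_n, wy) = \sum_(i < d) wy 0 i *: (0 : 'rV[R]_n, delta_mx 0 i).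
  rewrite {1}(row_sum_delta wy); elim/big_rec2: _ => [//|i a b _ <-].
  by apply: injective_projections => /=; rewrite ?scaler0 ?addr0.
rewrite linear_sum /edot; apply: eq_bigr => i _.
by rewrite linearZ /= !mxE mulrC.
Qed.

Hypothesis f_C1 : C1 f.

Lemma line_gradient_x y : line_gradient (fun x => f (x, y)) (fun x => gradx f (x, y)).
Proof.
have shift (a u : 'rV[R]_n) (s : R) : (a, y) + s *: (u, 0) = (a + s *: u, y).
  by apply: injective_projections => /=; rewrite ?scaler0 ?addr0.
move=> a u s; have := line_derive (f_C1.1 ((a, y) + s *: (u, 0))).
by rewrite shift diff_gradx (funext (fun t => congr1 f (shift a u t))).
Qed.

Lemma line_gradient_y x : line_gradient (fun y => f (x, y)) (fun y => grady f (x, y)).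
Proof.
have shift (a u : 'rV[R]_d) (s : R) : (x, a) + s *: (0, u) = (x, a + s *: u).
  by apply: injective_projections => /=; rewrite ?scaler0 ?addr0.
move=> a u s; have := line_derive (f_C1.1 ((x, a) + s *: (0, u))).
by rewrite shift diff_grady (funext (fun t => congr1 f (shift a u t))).
Qed.

Variables (X : set 'rV[R]_n) (Y : set 'rV[R]_d) (Lx Ly : R).
Hypothesis f_lip : lipschitz_grad X Y f Lx Ly.
Hypothesis cX : convex_set (X : set (convex_lmodType 'rV[R]_n)).
Hypothesis cY : convex_set (Y : set (convex_lmodType 'rV[R]_d)).

Lemma gradx_lipschitz y : Y y -> lipschitz_in X (fun x => gradx f (x, y)) Lx.
Proof.
move=> Yy a b Xa Xb; have [+ _] := f_lip.2.2 a b y y Xa Xb Yy Yy.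
by rewrite (subrr y) enorm0 addr0.
Qed.

Lemma grady_lipschitz x : X x -> lipschitz_in Y (fun y => grady f (x, y)) Ly.
Proof.
move=> Xx a b Ya Yb; have [_ +] := f_lip.2.2 x x a b Xx Xx Ya Yb.
by rewrite (subrr x) enorm0 add0r.
Qed.

Lemma weakly_convex_x y a b t : Y y -> X a -> X b -> 0 <= t -> t <= 1 ->
  f (a + t *: (b - a), y) <=
  (1 - t) * f (a, y) + t * f (b, y) + Lx / 2 * edot (b - a) (b - a) * t * (1 - t).
Proof.
move=> Yy Xa Xb t0 t1.
exact: (lipschitz_gradient_semiconvex cX (line_gradient_x y) (gradx_lipschitz Yy)
          Xa Xb t0 t1).
Qed.

Lemma weakly_concave_y x a b t : X x -> Y a -> Y b -> 0 <= t -> t <= 1 ->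
  (1 - t) * f (x, a) + t * f (x, b) - Ly / 2 * edot (b - a) (b - a) * t * (1 - t) <=
  f (x, a + t *: (b - a)).
Proof.
move=> Xx Ya Yb t0 t1.
have := lipschitz_gradient_semiconvex cY (line_gradientN (line_gradient_y x))
  (lipschitz_inN (grady_lipschitz Xx)) Ya Yb t0 t1.
by lra.
Qed.

(* The mixed second difference of f over a rectangle of X x Y, bounded through
   the variation of gradx in y and of grady in x, respectively. *)
Definition mixed_diff (x x' : 'rV[R]_n) (y y' : 'rV[R]_d) : R :=
  f (x', y') - f (x, y') - f (x', y) + f (x, y).

Lemma mixed_diff_le_Lx x x' y y' : X x -> X x' -> Y y -> Y y' ->
  mixed_diff x x' y y' <= Lx * enorm (x' - x) * enorm (y' - y).
Proof.
move=> Xx Xx' Yy Yy'.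
have gradK w : X w -> enorm (gradx f (w, y') - gradx f (w, y)) <= Lx * enorm (y' - y).
  by move=> Xw; have [+ _] := f_lip.2.2 w w y' y Xw Xw Yy' Yy; rewrite (subrr w) enorm0 add0r.
have := bounded_gradient_increment cX
  (line_gradientB (line_gradient_x y') (line_gradient_x y)) gradK Xx Xx'.
by rewrite /mixed_diff; lra.
Qed.

Lemma mixed_diff_le_Ly x x' y y' : X x -> X x' -> Y y -> Y y' ->
  mixed_diff x x' y y' <= Ly * enorm (x' - x) * enorm (y' - y).
Proof.
move=> Xx Xx' Yy Yy'.
have gradK w : Y w -> enorm (grady f (x', w) - grady f (x, w)) <= Ly * enorm (x' - x).
  by move=> Yw; have [_ +] := f_lip.2.2 x' x w w Xx' Xx Yw Yw; rewrite (subrr w) enorm0 addr0.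
have := bounded_gradient_increment cY
  (line_gradientB (line_gradient_y x') (line_gradient_y x)) gradK Yy Yy'.
by rewrite /mixed_diff; lra.
Qed.

End PartialGradients.

Section StrongConvexity.
Variables (R : realType) (m : nat).
Implicit Types (S : set 'rV[R]_m) (G : 'rV[R]_m -> R).

Definition strongly_convex_in S G (mu : R) :=
  forall a b t, S a -> S b -> 0 <= t -> t <= 1 ->
  G (a + t *: (b - a)) <=
  (1 - t) * G a + t * G b - mu / 2 * edot (b - a) (b - a) * t * (1 - t).

Lemma strongly_convex_attained_max (I : Type) (P : set I) (Fam : I -> 'rV[R]_m -> R)
    S G mu :
  convex_set (S : set (convex_lmodType 'rV[R]_m)) ->
  (forall i, P i -> strongly_convex_in S (Fam i) mu) ->
  (forall i a, P i -> S a -> Fam i a <= G a) ->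
  (forall a, S a -> exists2 i, P i & G a = Fam i a) ->
  strongly_convex_in S G mu.
Proof.
move=> cS Fam_conv Fam_le G_max a b t Sa Sb t0 t1.
have [i Pi ->] := G_max _ (segment_mem cS Sa Sb t0 t1).
have ha : (1 - t) * Fam i a <= (1 - t) * G a by rewrite ler_wpM2l ?subr_ge0 ?Fam_le.
have hb : t * Fam i b <= t * G b by rewrite ler_wpM2l ?Fam_le.
by have := Fam_conv i Pi a b t Sa Sb t0 t1; lra.
Qed.

Lemma argmax_opp S G a : is_argmax S G a -> is_argmin S (fun b => - G b) a.
Proof. by move=> [Sa Gmax]; split => // b Sb; rewrite lerN2 Gmax. Qed.

Lemma argmin_growth S G mu a b :
  0 <= mu -> strongly_convex_in S G mu -> convex_set (S : set (convex_lmodType 'rV[R]_m)) ->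
  is_argmin S G a -> S b -> mu / 2 * edot (b - a) (b - a) <= G b - G a.
Proof.
move=> mu0 Gconv cS [Sa Gmin] Sb.
set B := mu / 2 * edot (b - a) (b - a); set A := G b - G a.
have B0 : 0 <= B by rewrite mulr_ge0 ?divr_ge0 ?edot_ge0.
(* comparing G a with G on the segment [a, b] gives B (1 - t) <= A for t in (0, 1) *)
have key t : 0 < t -> t < 1 -> B * (1 - t) <= A.
  move=> t0 t1.
  have h1 := Gmin _ (segment_mem cS Sa Sb (ltW t0) (ltW t1)).
  have h2 := Gconv a b t Sa Sb (ltW t0) (ltW t1).
  have : t * (B * (1 - t)) <= t * A by rewrite /A /B; nra.
  by rewrite ler_pM2l.
have A0 : 0 <= A by have := key (1 / 2) ltac:(lra) ltac:(lra); nra.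
(* if A < B, then t = (B - A) / (2 B) violates key *)
have [//|AB] := lerP B A.
have B_gt0 : 0 < B := le_lt_trans A0 AB.
have t0 : 0 < (B - A) / (2 * B) by apply: divr_gt0; lra.
have t1 : (B - A) / (2 * B) < 1 by rewrite ltr_pdivrMr; lra.
have := key _ t0 t1.
have -> : B * (1 - (B - A) / (2 * B)) = (A + B) / 2 by field; lra.
by lra.
Qed.

Lemma argmin_stability S G1 G2 mu a1 a2 :
  0 <= mu -> strongly_convex_in S G1 mu -> strongly_convex_in S G2 mu ->
  convex_set (S : set (convex_lmodType 'rV[R]_m)) ->
  is_argmin S G1 a1 -> is_argmin S G2 a2 ->
  mu * edot (a2 - a1) (a2 - a1) <= (G1 a2 - G2 a2) - (G1 a1 - G2 a1).
Proof.
move=> mu0 G1conv G2conv cS m1 m2.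
have h1 := argmin_growth mu0 G1conv cS m1 m2.1.
have h2 := argmin_growth mu0 G2conv cS m2 m1.1.
rewrite -!enorm_sq enormB !enorm_sq in h2.
by lra.
Qed.

Lemma sq_le_mul_bound (mu K s e : R) :
  0 < mu -> 0 <= s -> 0 <= K * e -> mu * s ^+ 2 <= K * s * e -> s <= K / mu * e.
Proof.
move=> mu_gt0 s0 Ke0 H; rewrite mulrAC ler_pdivlMr //.
have [->|s_neq0] := eqVneq s 0; first by rewrite mul0r.
have s_gt0 : 0 < s by rewrite lt_def s_neq0.
by nra.
Qed.

Lemma argmin_stability_linear S G1 G2 mu K e a1 a2 :
  0 < mu -> convex_set (S : set (convex_lmodType 'rV[R]_m)) ->
  strongly_convex_in S G1 mu -> strongly_convex_in S G2 mu ->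
  is_argmin S G1 a1 -> is_argmin S G2 a2 -> 0 <= K * e ->
  (G1 a2 - G2 a2) - (G1 a1 - G2 a1) <= K * enorm (a2 - a1) * e ->
  enorm (a2 - a1) <= K / mu * e.
Proof.
move=> mu_gt0 cS G1conv G2conv m1 m2 Ke0 incr.
apply: sq_le_mul_bound => //; first exact: enorm_ge0.
rewrite enorm_sq; apply: le_trans incr.
exact: (argmin_stability (ltW mu_gt0) G1conv G2conv cS m1 m2).
Qed.

Lemma argmin_prox_stability S G1 G2 mu r (z z' a1 a2 : 'rV[R]_m) :
  0 < mu -> 0 <= r -> convex_set (S : set (convex_lmodType 'rV[R]_m)) ->
  strongly_convex_in S G1 mu -> strongly_convex_in S G2 mu ->
  is_argmin S G1 a1 -> is_argmin S G2 a2 ->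
  (forall a, S a -> G1 a - G2 a = r / 2 * (edot (a - z) (a - z) - edot (a - z') (a - z'))) ->
  enorm (a2 - a1) <= r / mu * enorm (z - z').
Proof.
move=> mu_gt0 r0 cS G1conv G2conv m1 m2 shift.
apply: (argmin_stability_linear mu_gt0 cS G1conv G2conv m1 m2).
  by rewrite mulr_ge0 ?enorm_ge0.
rewrite (shift _ m2.1) (shift _ m1.1) -mulrBr sqdist_shift.
have := ler_wpM2l r0 (edot_CS (a2 - a1) (z' - z)).
by rewrite (enormB z'); lra.
Qed.

Lemma quadratic_root_bound (mu s1 s2 r s e : R) :
  0 < mu -> 0 < s1 -> 0 < s2 -> 0 < r -> 0 <= s -> 0 <= e ->
  mu * s ^+ 2 <= r * (s1 * s * e + s2 * e ^+ 2) ->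
  s <= (r * s1 / mu + s2 / s1) * e.
Proof.
move=> mu_gt0 s1_gt0 s2_gt0 r_gt0 s0 e0 H.
set A := r * s1 / mu; set q := s2 / s1.
have A_gt0 : 0 < A by rewrite divr_gt0 ?mulr_gt0.
have q_gt0 : 0 < q by rewrite divr_gt0.
have quad : s ^+ 2 <= A * s * e + A * q * e ^+ 2.
  rewrite -(ler_pM2l mu_gt0); apply: (le_trans H); rewrite le_eqVlt; apply/orP; left.
  by apply/eqP; rewrite /A /q; field; rewrite !gt_eqF.
(* (A + q) e is at least the positive root of s^2 - A e s - A q e^2 *)
rewrite leNgt; apply/negP => lt.
have s_gt0 : 0 < s := le_lt_trans (mulr_ge0 (addr_ge0 (ltW A_gt0) (ltW q_gt0)) e0) lt.
have sq : s * (q * e) < s * (s - A * e) by rewrite ltr_pM2l //; lra.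
have := mulr_ge0 (ltW q_gt0) e0.
by nra.
Qed.

End StrongConvexity.

Lemma sup_attained (R : realType) (E : set R) x :
  E x -> (forall y, E y -> y <= x) -> sup E = x.
Proof.
move=> Ex ub; apply/le_anti/andP; split; first by apply: ge_sup; [exists x | move=> y /ub].
by apply: ub_le_sup => //; exists x => y /ub.
Qed.

Lemma inf_attained (R : realType) (E : set R) x :
  E x -> (forall y, E y -> x <= y) -> inf E = x.
Proof.
move=> Ex lb; apply/le_anti/andP; split; last by apply: lb_le_inf; [exists x | move=> y /lb].
by apply: ge_inf => //; exists x => y /lb.
Qed.

Section ProximalSaddle.
Variables (R : realType) (n d : nat) (X : set 'rV[R]_n) (Y : set 'rV[R]_d).
Variables (f : 'rV[R]_n * 'rV[R]_d -> R) (Lx Ly r1 r2 : R).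
Hypothesis f_C1 : C1 f.
Hypothesis f_lip : lipschitz_grad X Y f Lx Ly.
Hypothesis cX : convex_set (X : set (convex_lmodType 'rV[R]_n)).
Hypothesis cY : convex_set (Y : set (convex_lmodType 'rV[R]_d)).

Local Notation F := (Fobj f r1 r2).

Lemma Fobj_shift_z x y z z' v :
  F x y z v - F x y z' v = r1 / 2 * (edot (x - z) (x - z) - edot (x - z') (x - z')).
Proof. by rewrite /Fobj !enorm_sq; ring. Qed.

Lemma Fobj_shift_v x y z v v' :
  - F x y z v - - F x y z v' = r2 / 2 * (edot (y - v) (y - v) - edot (y - v') (y - v')).
Proof. by rewrite /Fobj !enorm_sq; ring. Qed.

Lemma Fobj_strongly_convex_x y z v : Y y -> strongly_convex_in X (fun x => F x y z v) (r1 - Lx).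
Proof.
move=> Yy a b t Xa Xb t0 t1.
have := weakly_convex_x f_C1 f_lip cX Yy Xa Xb t0 t1.
by rewrite /Fobj !enorm_sq edot_segment; lra.
Qed.

Lemma Fobj_strongly_concave_y x z v :
  X x -> strongly_convex_in Y (fun y => - F x y z v) (r2 - Ly).
Proof.
move=> Xx a b t Ya Yb t0 t1.
have := weakly_concave_y f_C1 f_lip cY Xx Ya Yb t0 t1.
by rewrite /Fobj !enorm_sq edot_segment; lra.
Qed.

Variables (xyzv : 'rV[R]_d -> 'rV[R]_n -> 'rV[R]_d -> 'rV[R]_n)
          (yxzv : 'rV[R]_n -> 'rV[R]_n -> 'rV[R]_d -> 'rV[R]_d)
          (xzv : 'rV[R]_n -> 'rV[R]_d -> 'rV[R]_n)
          (yzv : 'rV[R]_n -> 'rV[R]_d -> 'rV[R]_d).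
Hypothesis xyzv_min :
  forall y z v, Y y -> is_argmin X (fun x => F x y z v) (xyzv y z v).
Hypothesis yxzv_max :
  forall x z v, X x -> is_argmax Y (fun y => F x y z v) (yxzv x z v).
Hypothesis xzv_min : forall z v, is_argmin X (fun x => hfun Y f r1 r2 x z v) (xzv z v).
Hypothesis yzv_max : forall z v, is_argmax Y (fun y => dfun X f r1 r2 y z v) (yzv z v).

Lemma hfun_attained x z v : X x -> hfun Y f r1 r2 x z v = F x (yxzv x z v) z v.
Proof.
move=> Xx; have [Yy ymax] := yxzv_max z v Xx.
by apply: sup_attained => [|_ [y' Yy' <-]]; [exists (yxzv x z v) | exact: ymax].
Qed.

Lemma dfun_attained y z v : Y y -> dfun X f r1 r2 y z v = F (xyzv y z v) y z v.
Proof.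
move=> Yy; have [Xx xmin] := xyzv_min z v Yy.
by apply: inf_attained => [|_ [x' Xx' <-]]; [exists (xyzv y z v) | exact: xmin].
Qed.

Lemma hfun_strongly_convex z v :
  strongly_convex_in X (fun x => hfun Y f r1 r2 x z v) (r1 - Lx).
Proof.
apply: (strongly_convex_attained_max (P := Y) (Fam := fun y x => F x y z v)) => //.
- by move=> y Yy; exact: Fobj_strongly_convex_x.
- by move=> y x Yy Xx; rewrite hfun_attained //; exact: (yxzv_max z v Xx).2.
- by move=> x Xx; exists (yxzv x z v); [exact: (yxzv_max z v Xx).1 | exact: hfun_attained].
Qed.

Lemma neg_dfun_strongly_convex z v :
  strongly_convex_in Y (fun y => - dfun X f r1 r2 y z v) (r2 - Ly).
Proof.
apply: (strongly_convex_attained_max (P := X) (Fam := fun x y => - F x y z v)) => //.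
- by move=> x Xx; exact: Fobj_strongly_concave_y.
- by move=> x y Xx Yy; rewrite dfun_attained // lerN2; exact: (xyzv_min z v Yy).2.
- by move=> y Yy; exists (xyzv y z v); [exact: (xyzv_min z v Yy).1 | rewrite dfun_attained].
Qed.

Lemma hfun_shift x z z' v : X x ->
  hfun Y f r1 r2 x z v - hfun Y f r1 r2 x z' v =
  r1 / 2 * (edot (x - z) (x - z) - edot (x - z') (x - z')).
Proof.
move=> Xx; rewrite !hfun_attained //.
have [Yy1 max1] := yxzv_max z v Xx; have [Yy2 max2] := yxzv_max z' v Xx.
have := max1 _ Yy2; have := max2 _ Yy1.
have := Fobj_shift_z x (yxzv x z v) z z' v; have := Fobj_shift_z x (yxzv x z' v) z z' v.
by lra.
Qed.

Lemma neg_dfun_shift y z v v' : Y y ->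
  - dfun X f r1 r2 y z v - - dfun X f r1 r2 y z v' =
  r2 / 2 * (edot (y - v) (y - v) - edot (y - v') (y - v')).
Proof.
move=> Yy; rewrite !dfun_attained //.
have [Xx1 min1] := xyzv_min z v Yy; have [Xx2 min2] := xyzv_min z v' Yy.
have := min1 _ Xx2; have := min2 _ Xx1.
have := Fobj_shift_v (xyzv y z v) y z v v'; have := Fobj_shift_v (xyzv y z v') y z v v'.
by lra.
Qed.

Lemma dfun_shift_z_le y z z' v : Y y ->
  dfun X f r1 r2 y z' v - dfun X f r1 r2 y z v <=
  r1 / 2 * (edot (xyzv y z v - z') (xyzv y z v - z') -
            edot (xyzv y z v - z) (xyzv y z v - z)).
Proof.
move=> Yy; rewrite !dfun_attained //.
have := (xyzv_min z' v Yy).2 _ (xyzv_min z v Yy).1.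
have := Fobj_shift_z (xyzv y z v) y z' z v.
by lra.
Qed.

Hypothesis r1_gt_Lx : Lx < r1.
Hypothesis r2_gt_Ly : Ly < r2.

Lemma xyzv_lipschitz_y y y' z v : Y y -> Y y' ->
  enorm (xyzv y' z v - xyzv y z v) <= (Ly + r1 - Lx) / (r1 - Lx) * enorm (y' - y).
Proof.
move=> Yy Yy'; have [_ [Ly_gt0 _]] := f_lip.
have mu_gt0 : 0 < r1 - Lx by rewrite subr_gt0.
have m1 := xyzv_min z v Yy'; have m2 := xyzv_min z v Yy.
have sigma_ge : Ly / (r1 - Lx) <= (Ly + r1 - Lx) / (r1 - Lx).
  by rewrite ler_pM2r ?invr_gt0 //; lra.
rewrite enormB; apply: le_trans (ler_wpM2r (enorm_ge0 _) sigma_ge).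
apply: (argmin_stability_linear mu_gt0 cX (Fobj_strongly_convex_x z v Yy')
          (Fobj_strongly_convex_x z v Yy) m1 m2).
  by rewrite mulr_ge0 ?enorm_ge0 ?ltW.
have := mixed_diff_le_Ly f_C1 f_lip cY m1.1 m2.1 Yy Yy'.
by rewrite /mixed_diff /Fobj; lra.
Qed.

Lemma xyzv_lipschitz_z y z z' v : Y y ->
  enorm (xyzv y z' v - xyzv y z v) <= r1 / (r1 - Lx) * enorm (z - z').
Proof.
move=> Yy; have [Lx_gt0 _] := f_lip.
apply: (argmin_prox_stability _ _ cX (Fobj_strongly_convex_x z v Yy)
          (Fobj_strongly_convex_x z' v Yy) (xyzv_min z v Yy) (xyzv_min z' v Yy)).
- by rewrite subr_gt0.
- exact/ltW/(lt_trans Lx_gt0).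
- by move=> a _; exact: Fobj_shift_z.
Qed.

Lemma xzv_lipschitz_z z z' v :
  enorm (xzv z' v - xzv z v) <= r1 / (r1 - Lx) * enorm (z - z').
Proof.
have [Lx_gt0 _] := f_lip.
apply: (argmin_prox_stability _ _ cX (hfun_strongly_convex z v)
          (hfun_strongly_convex z' v) (xzv_min z v) (xzv_min z' v)).
- by rewrite subr_gt0.
- exact/ltW/(lt_trans Lx_gt0).
- by move=> a Xa; exact: hfun_shift.
Qed.

Lemma yxzv_lipschitz_x x x' z v : X x -> X x' ->
  enorm (yxzv x z v - yxzv x' z v) <= (Lx + r2 - Ly) / (r2 - Ly) * enorm (x - x').
Proof.
move=> Xx Xx'; have [Lx_gt0 _] := f_lip.
have mu_gt0 : 0 < r2 - Ly by rewrite subr_gt0.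
have m1 := argmax_opp (yxzv_max z v Xx); have m2 := argmax_opp (yxzv_max z v Xx').
have sigma_ge : Lx / (r2 - Ly) <= (Lx + r2 - Ly) / (r2 - Ly).
  by rewrite ler_pM2r ?invr_gt0 //; lra.
rewrite enormB (enormB x); apply: le_trans (ler_wpM2r (enorm_ge0 _) sigma_ge).
apply: (argmin_stability_linear mu_gt0 cY (Fobj_strongly_concave_y z v Xx)
          (Fobj_strongly_concave_y z v Xx') m1 m2).
  by rewrite mulr_ge0 ?enorm_ge0 ?ltW.
have := mixed_diff_le_Lx f_C1 f_lip cX Xx Xx' m1.1 m2.1.
by rewrite /mixed_diff /Fobj; lra.
Qed.

Lemma yxzv_lipschitz_v x z v v' : X x ->
  enorm (yxzv x z v - yxzv x z v') <= r2 / (r2 - Ly) * enorm (v - v').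
Proof.
move=> Xx; have [_ [Ly_gt0 _]] := f_lip.
rewrite enormB; apply: (argmin_prox_stability _ _ cY (Fobj_strongly_concave_y z v Xx)
  (Fobj_strongly_concave_y z v' Xx) (argmax_opp (yxzv_max z v Xx))
  (argmax_opp (yxzv_max z v' Xx))).
- by rewrite subr_gt0.
- exact/ltW/(lt_trans Ly_gt0).
- by move=> a _; exact: Fobj_shift_v.
Qed.

Lemma yzv_lipschitz_v z v v' :
  enorm (yzv z v - yzv z v') <= r2 / (r2 - Ly) * enorm (v - v').
Proof.
have [_ [Ly_gt0 _]] := f_lip.
rewrite enormB; apply: (argmin_prox_stability _ _ cY (neg_dfun_strongly_convex z v)
  (neg_dfun_strongly_convex z v') (argmax_opp (yzv_max z v)) (argmax_opp (yzv_max z v'))).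
- by rewrite subr_gt0.
- exact/ltW/(lt_trans Ly_gt0).
- by move=> a Ya; exact: neg_dfun_shift.
Qed.

(* Here z enters d only through the
   inner minimizer, so the increment of -d is bounded by r1 <p - q, z - z'>
   with p, q inner minimizers; splitting p - q through c = x(y(z,v), z, v)
   and using (i) and (ii) leaves a quadratic inequality in |y(z',v) - y(z,v)|. *)
Lemma yzv_lipschitz_z z z' v :
  enorm (yzv z v - yzv z' v) <=
  (r1 * ((Ly + r1 - Lx) / (r1 - Lx)) / (r2 - Ly) +
   (r1 / (r1 - Lx)) / ((Ly + r1 - Lx) / (r1 - Lx))) * enorm (z - z').
Proof.
have [Lx_gt0 [Ly_gt0 _]] := f_lip.
have mu1_gt0 : 0 < r1 - Lx by rewrite subr_gt0.
have mu2_gt0 : 0 < r2 - Ly by rewrite subr_gt0.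
have r1_gt0 : 0 < r1 := lt_trans Lx_gt0 r1_gt_Lx.
have m1 := argmax_opp (yzv_max z v); have m2 := argmax_opp (yzv_max z' v).
set a1 := yzv z v in m1 *; set a2 := yzv z' v in m2 *.
set p := xyzv a2 z v; set q := xyzv a1 z' v; set c := xyzv a1 z v.
set s := enorm (a2 - a1); set e := enorm (z - z').
have increment : (r2 - Ly) * s ^+ 2 <= r1 * edot (p - q) (z - z').
  have := argmin_stability (ltW mu2_gt0) (neg_dfun_strongly_convex z v)
            (neg_dfun_strongly_convex z' v) cY m1 m2.
  have := dfun_shift_z_le z z' v m2.1; have := dfun_shift_z_le z' z v m1.1.
  have := congr1 (fun w => r1 / 2 * w) (sqdist_shift q p z' z).
  by rewrite /s enorm_sq /= -/p -/q; lra.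
have hpc : enorm (p - c) <= (Ly + r1 - Lx) / (r1 - Lx) * s :=
  xyzv_lipschitz_y z v m1.1 m2.1.
have hqc : enorm (c - q) <= r1 / (r1 - Lx) * e.
  by rewrite enormB; exact: xyzv_lipschitz_z z z' v m1.1.
have inner : edot (p - q) (z - z') <=
             (Ly + r1 - Lx) / (r1 - Lx) * s * e + r1 / (r1 - Lx) * e ^+ 2.
  have := edot_CS (p - c) (z - z'); have := edot_CS (c - q) (z - z').
  have := ler_wpM2r (enorm_ge0 (z - z')) hpc; have := ler_wpM2r (enorm_ge0 (z - z')) hqc.
  by rewrite -/e !edotBl expr2; lra.
rewrite enormB -/s; apply: quadratic_root_bound (enorm_ge0 _) (enorm_ge0 _) _ => //.
- by apply: divr_gt0; lra.
- exact: divr_gt0.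
- exact: le_trans increment (ler_wpM2l (ltW r1_gt0) inner).
Qed.

End ProximalSaddle.

Unset Implicit Arguments.

Theorem lemma2 (R : realType) (n d : nat)
  (X : set 'rV[R]_n) (Y : set 'rV[R]_d)
  (f : 'rV[R]_n * 'rV[R]_d -> R) (Lx Ly r1 r2 : R)
  (xyzv : 'rV[R]_d -> 'rV[R]_n -> 'rV[R]_d -> 'rV[R]_n)
  (yxzv : 'rV[R]_n -> 'rV[R]_n -> 'rV[R]_d -> 'rV[R]_d)
  (xzv : 'rV[R]_n -> 'rV[R]_d -> 'rV[R]_n)
  (yzv : 'rV[R]_n -> 'rV[R]_d -> 'rV[R]_d) :
  X !=set0 -> convex_set (X : set (convex_lmodType 'rV[R]_n)) -> compact X ->
  Y !=set0 -> convex_set (Y : set (convex_lmodType 'rV[R]_d)) -> compact Y ->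
  C1 f ->
  lipschitz_grad X Y f Lx Ly ->
  Lx < r1 ->
  (Ly / (r1 - Lx) + 2) * Ly < r2 ->
  (* x(y,z,v) = argmin_{x in X} F(x,y,z,v) *)
  (forall y z v, Y y -> is_argmin X (fun x => Fobj f r1 r2 x y z v) (xyzv y z v)) ->
  (* y(x,z,v) = argmax_{y in Y} F(x,y,z,v) *)
  (forall x z v, X x -> is_argmax Y (fun y => Fobj f r1 r2 x y z v) (yxzv x z v)) ->
  (* x(z,v) = argmin_{x in X} h(x,z,v) *)
  (forall z v, is_argmin X (fun x => hfun Y f r1 r2 x z v) (xzv z v)) ->
  (* y(z,v) = argmax_{y in Y} d(y,z,v) *)
  (forall z v, is_argmax Y (fun y => dfun X f r1 r2 y z v) (yzv z v)) ->
  let sigma1 := (Ly + r1 - Lx) / (r1 - Lx) in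
  let sigma2 := r1 / (r1 - Lx) in
  let sigma3 := r1 * sigma1 / (r2 - Ly) + sigma2 / sigma1 in
  let sigma4 := (Lx + r2 - Ly) / (r2 - Ly) in
  let sigma5 := r2 / (r2 - Ly) in
  forall (x x' : 'rV[R]_n) (y y' : 'rV[R]_d) (z z' : 'rV[R]_n) (v v' : 'rV[R]_d),
    X x -> X x' -> Y y -> Y y' ->
    (enorm (xyzv y' z v - xyzv y z v) <= sigma1 * enorm (y' - y)) /\
    (enorm (xyzv y z' v - xyzv y z v) <= sigma2 * enorm (z - z')) /\
    (enorm (xzv z' v - xzv z v) <= sigma2 * enorm (z - z')) /\
    (enorm (yzv z v - yzv z' v) <= sigma3 * enorm (z - z')) /\
    (enorm (yxzv x z v - yxzv x' z v) <= sigma4 * enorm (x - x')) /\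
    (enorm (yxzv x z v - yxzv x z v') <= sigma5 * enorm (v - v')) /\
    (enorm (yzv z v - yzv z v') <= sigma5 * enorm (v - v')).
Proof.
move=> _ cX _ _ cY _ f_C1 f_lip r1_gt_Lx r2_large xyzv_min yxzv_max xzv_min yzv_max
  sigma1 sigma2 sigma3 sigma4 sigma5 x x' y y' z z' v v' Xx Xx' Yy Yy'.
have r2_gt_Ly : Ly < r2.
  have [Lx_gt0 [Ly_gt0 _]] := f_lip.
  have : 0 <= Ly / (r1 - Lx) * Ly by rewrite mulr_ge0 // ?divr_ge0 // ?ltW // subr_gt0.
  by lra.
split; first exact: (xyzv_lipschitz_y f_C1 f_lip cX cY xyzv_min r1_gt_Lx z v Yy Yy').
split; first exact: (xyzv_lipschitz_z f_C1 f_lip cX xyzv_min r1_gt_Lx z z' v Yy).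
split; first exact: (xzv_lipschitz_z f_C1 f_lip cX yxzv_max xzv_min r1_gt_Lx z z' v).
split; first exact: (yzv_lipschitz_z f_C1 f_lip cX cY xyzv_min yzv_max r1_gt_Lx r2_gt_Ly z z' v).
split; first exact: (yxzv_lipschitz_x f_C1 f_lip cX cY yxzv_max r2_gt_Ly z v Xx Xx').
split; first exact: (yxzv_lipschitz_v f_C1 f_lip cY yxzv_max r2_gt_Ly z v v' Xx).
exact: (yzv_lipschitz_v f_C1 f_lip cY xyzv_min yzv_max r2_gt_Ly z v v').
Qed.
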